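(* For $k\ge0$ let $(\mathcal{Y}Sym)^k$ be the span of $\{M_t: t\in\mathcal{Y}^k\}$. Then the decomposition $\mathcal{Y}Sym=\bigoplus_{k\ge0}(\mathcal{Y}Sym)^k$ is a coalgebra grading, and with this grading $\mathcal{Y}Sym$ is a cofree graded coalgebra (on $V=(\mathcal{Y}Sym)^1$).
   Context: $\mathcal{Y}_n$ is the set of rooted planar binary trees with $n$ internal nodes; $\mathcal{Y}_0=\{|\}$. $s\vee t$ denotes the tree with left subtree $s$ and right subtree $t$ at the root; each $t\ne|$ is uniquely $t_l\vee t_r$. The Tamari order on $\mathcal{Y}_n$ is generated by replacing a subtree $(a\vee b)\vee c$ by the larger $a\vee(b\vee c)$. $s\backslash t$: $|\backslash t=t$, $s\backslash t=s_l\vee(s_r\backslash t)$. A tree $t\neq|$ is progressive if $t_r=|$; every $t\ne|$ has a unique decomposition $t=t_1\backslash t_2\backslash\cdots\backslash t_k$ into progressive trees. $\mathcal{Y}^0=\mathcal{Y}_0$, and for $k\ge1$, $\mathcal{Y}^k$ is the set of trees (of all sizes) with exactly $k$ progressive components. $\mathcal{Y}Sym$ is the graded Hopf algebra over $\mathbb{Q}$ with basis $\{F_t\}$; leaves of $t\in\mathcal{Y}_n$ are numbered $0,\dots,n$; splitting $t$ at leaf $i$, $t\to(t_0,t_1)$, is defined recursively by: $|\to(|,|)$; for $t=t_l\vee t_r$, if leaf $i$ is in $t_l$ and $t_l\to(a,b)$ there then $t\to(a,b\vee t_r)$, if leaf $i$ is in $t_r$ and $t_r\to(c,d)$ there then $t\to(t_l\vee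 c,d)$. Coproduct: $\Delta(F_t)=\sum_{i=0}^nF_{t_0}\otimes F_{t_1}$. Monomial basis: $M_t=\sum_{t\le s}\mu_{\mathcal{Y}_n}(t,s)F_s$ (Möbius function of the Tamari order). A coalgebra grading is a decomposition $C=\bigoplus_k C^k$ with $\Delta(C^k)\subseteq\sum_{i+j=k}C^i\otimes C^j$ and counit vanishing on $C^k$, $k\ge1$. The cofree graded coalgebra on a vector space $V$ is $Q(V)=\bigoplus_{k\ge0}V^{\otimes k}$ with deconcatenation coproduct $\Delta(v_1\otimes\cdots\otimes v_k)=\sum_{i=0}^k(v_1\otimes\cdots\otimes v_i)\otimes(v_{i+1}\otimes\cdots\otimes v_k)$; a graded coalgebra is cofree if it is isomorphic as a graded coalgebra to some $Q(V)$. *)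

From HB Require Import structures.
From mathcomp Require Import all_boot all_order all_algebra.
From mathcomp Require Import finmap.
From mathcomp.multinomials Require Import monalg.
From Stdlib Require Import Relations ClassicalEpsilon.

Set Implicit Arguments.
Unset Strict Implicit.
Unset Printing Implicit Defensive.
Import GRing.Theory.
Local Open Scope ring_scope.

(* Rooted planar binary trees.  Leaf = |, Node s t = s \/ t.          *)
Inductive tree := Leaf | Node of tree & tree.

Fixpoint tree_enc (t : tree) : GenTree.tree unit :=
  match t with
  | Leaf => GenTree.Leaf tt
  | Node l r => GenTree.Node 0 [:: tree_enc l; tree_enc r]
  end.

Fixpoint tree_dec (g : GenTree.tree unit) : option tree :=
  match g with
  | GenTree.Leaf _ => Some Leaf
  | GenTree.Node _ [:: gl; gr] =>
      match tree_dec gl, tree_dec gr with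
      | Some l, Some r => Some (Node l r)
      | _, _ => None
      end
  | GenTree.Node _ _ => None
  end.

Lemma tree_encK : pcancel tree_enc tree_dec.
Proof. by elim=> [|l IHl r IHr] //=; rewrite IHl IHr. Qed.

HB.instance Definition _ := Countable.copy tree (pcan_type tree_encK).

(* number of internal nodes: t \in Y_n iff tsize t = n *)
Fixpoint tsize (t : tree) : nat :=
  match t with Leaf => 0%N | Node l r => (tsize l + tsize r).+1 end.

(* s \ t  :  | \ t = t,  s \ t = s_l \/ (s_r \ t) *)
Fixpoint under (s t : tree) : tree :=
  match s with Leaf => t | Node sl sr => Node sl (under sr t) end.

Definition progressive (t : tree) : bool :=
  if t is Node _ Leaf then true else false.

(* The decomposition t = t_1 \ t_2 \ ... \ t_k into progressive trees
   (empty for t = |).  Since (a \/ |) \ r = a \/ r, the first component of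
   a \/ r is a \/ | and the rest is the decomposition of r. *)
Fixpoint prog_decomp (t : tree) : seq tree :=
  match t with Leaf => [::] | Node a r => Node a Leaf :: prog_decomp r end.

Definition inYk (k : nat) (t : tree) : bool := size (prog_decomp t) == k.

Inductive rot_step : tree -> tree -> Prop :=
  | rot_root a b c : rot_step (Node (Node a b) c) (Node a (Node b c))
  | rot_left l l' r : rot_step l l' -> rot_step (Node l r) (Node l' r)
  | rot_right l r r' : rot_step r r' -> rot_step (Node l r) (Node l r').

Definition tamari_le (s t : tree) : Prop := clos_refl_trans tree rot_step s t.

Definition tamari_leb (s t : tree) : bool :=
  if excluded_middle_informative (tamari_le s t) then true else false.

Fixpoint trees_upto (n : nat) : seq (seq tree) :=
  match n with
  | 0%N => [:: [:: Leaf]]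
  | n'.+1 =>
      let T := trees_upto n' in
      rcons T (flatten [seq [seq Node l r | l <- nth [::] T i,
                                                 r <- nth [::] T (n' - i)]
                         | i <- iota 0 n])
  end.

Definition trees (n : nat) : seq tree := nth [::] (trees_upto n) n.

Definition zeta_mx (n : nat) : 'M[rat]_(size (trees n)) :=
  \matrix_(i, j) (tamari_leb (nth Leaf (trees n) i) (nth Leaf (trees n) j))%:R.

Definition mobius (n : nat) (s t : tree) : rat :=
  \sum_(i < size (trees n)) \sum_(j < size (trees n))
     ((nth Leaf (trees n) i == s) && (nth Leaf (trees n) j == t))%:R
       * invmx (zeta_mx n) i j.

(* YSym = Q-vector space with basis {F_t}, realized as {malg rat[tree]};
   F_t = bas t.  Tensor products of free spaces are realized on the
   product basis. *)
Notation YSym := {malg rat[tree]}.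

Definition bas {K : choiceType} (k : K) : {malg rat[K]} := @mkmalgU K rat k 1.
Notation YSym2 := {malg rat[(tree * tree)%type]}.

Definition F (t : tree) : YSym := bas t.

(* splitting at leaf i (leaves of t numbered 0..tsize t from left to right) *)
Fixpoint split_at (t : tree) (i : nat) : tree * tree :=
  match t with
  | Leaf => (Leaf, Leaf)
  | Node l r =>
      if (i <= tsize l)%N then
        let: (a, b) := split_at l i in (a, Node b r)
      else
        let: (c, d) := split_at r (i - (tsize l).+1) in (Node l c, d)
  end.

Definition DeltaF (t : tree) : YSym2 :=
  \sum_(i < (tsize t).+1) bas (split_at t i).

Definition Delta (x : YSym) : YSym2 := \sum_(t <- msupp x) x@_t *: DeltaF t.
Definition eps (x : YSym) : rat := x@_Leaf.

Definition M (t : tree) : YSym :=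
  \sum_(s <- trees (tsize t) | tamari_leb t s) mobius (tsize t) t s *: F s.

Definition inspan (V : lmodType rat) (P : V -> Prop) (v : V) : Prop :=
  exists (vs : seq V) (cs : seq rat),
    (forall w, w \in vs -> P w) /\ v = \sum_(i < size vs) cs`_i *: vs`_i.

Definition tens (A B : choiceType) (x : {malg rat[A]}) (y : {malg rat[B]})
  : {malg rat[(A * B)%type]} :=
  \sum_(a <- msupp x) \sum_(b <- msupp y) (x@_a * y@_b) *: bas (a, b).

Definition YSymk (k : nat) (x : YSym) : Prop :=
  inspan (fun v => exists t, inYk k t /\ v = M t) x.

Definition YSymk2 (k : nat) (z : YSym2) : Prop :=
  inspan (fun w => exists (i j : nat) (x y : YSym),
            (i + j)%N = k /\ YSymk i x /\ YSymk j y /\ w = tens x y) z.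

(* Tensor coalgebra.  The tensor powers of a subspace V of YSym are
   realized inside T(YSym) = {malg rat[seq tree]} (basis: words of trees,
   a word of length k being F_{t1} (x) ... (x) F_{tk}). *)
Notation TY := {malg rat[seq tree]}.
Notation TY2 := {malg rat[(seq tree * seq tree)%type]}.

Fixpoint tensn (vs : seq YSym) : TY :=
  match vs with
  | [::] => bas (Nil tree)
  | v :: vs' =>
      let z := tensn vs' in
      \sum_(a <- msupp v) \sum_(w <- msupp z) (v@_a * z@_w) *: bas (a :: w)
  end.

Definition tpow (inV : YSym -> Prop) (k : nat) (z : TY) : Prop :=
  inspan (fun w => exists vs : seq YSym,
            size vs = k /\ (forall v, v \in vs -> inV v) /\ w = tensn vs) z.

Definition cofreeQ (inV : YSym -> Prop) (z : TY) : Prop :=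
  inspan (fun w => exists k, tpow inV k w) z.

Definition deconc (z : TY) : TY2 :=
  \sum_(w <- msupp z) z@_w *:
     \sum_(i < (size w).+1) bas (take i w, drop i w).
Definition epsQ (z : TY) : rat := z@_[::].

Definition tensmap (phi : TY -> YSym) (z : TY2) : YSym2 :=
  \sum_(p <- msupp z) z@_p *: tens (phi (bas p.1)) (phi (bas p.2)).

From HB Require Import structures.
From mathcomp Require Import all_boot all_order all_algebra.
From mathcomp Require Import finmap.
From mathcomp.multinomials Require Import monalg.
From mathcomp Require Import zify.
From Stdlib Require Import Relations ClassicalEpsilon.
From Pilot Require Import Defs.
Import GRing.Theory.
Set Implicit Arguments.
Unset Strict Implicit.
Unset Printing Implicit Defensive.

(* The monomial basis diagonalises the coproduct.  The Tamari interval above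
   [r \ s] is a product: [u <= r \ s] iff the two pieces of [u] split at leaf
   [tsize r] lie above [r] and [s].  Since [F u = \sum_(u <= t) M t], this
   turns the splitting formula for [Delta (F u)] into
     [Delta (M (t1 \ ... \ tk)) = \sum_j M (t1 \ ... \ tj) (x) M (t(j+1) \ ... \ tk)]
   for progressive [ti].  So the number of progressive components is a
   coalgebra grading, and, the progressive decomposition being unique,
   [M t1 (x) ... (x) M tk |-> M (t1 \ ... \ tk)] is an isomorphism of graded
   coalgebras from the tensor coalgebra on (YSym)^1 onto YSym. *)

(** * The Tamari order *)

Local Notation tle := tamari_le.
(* [tuple] also exports a [tsize]. *)
Local Notation tsize := Defs.tsize.

Lemma tamari_refl t : tle t t. Proof. exact: rt_refl. Qed.

Lemma tamari_trans a b c : tle a b -> tle b c -> tle a c.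
Proof. exact: rt_trans. Qed.

Lemma tamari_rot a b c : tle (Node (Node a b) c) (Node a (Node b c)).
Proof. by apply: rt_step; constructor. Qed.

Lemma tamari_homo (f : tree -> tree) :
  (forall a b, rot_step a b -> tle (f a) (f b)) -> {homo f : a b / tle a b}.
Proof.
move=> f_rot a b; elim=> [x y /f_rot // | x | x y z _ fxy _ fyz].
  exact: tamari_refl.
exact: tamari_trans fxy fyz.
Qed.

Lemma tamari_nodel l l' r : tle l l' -> tle (Node l r) (Node l' r).
Proof. by apply: (tamari_homo (f := Node^~ r)) => a b ab; apply/rt_step/rot_left. Qed.

Lemma tamari_noder l r r' : tle r r' -> tle (Node l r) (Node l r').
Proof. by apply: (tamari_homo (f := Node l)) => a b ab; apply/rt_step/rot_right. Qed.

Lemma rot_step_tsize a b : rot_step a b -> tsize a = tsize b.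
Proof. by elim=> /= *; lia. Qed.

Lemma tamari_tsize a b : tle a b -> tsize a = tsize b.
Proof. by elim=> [x y /rot_step_tsize | | x y z _ -> _ ->]. Qed.

(* Rotations strictly increase this potential, so strict Tamari chains have
   bounded length: the zeta matrix of [Y_n] is unipotent. *)
Fixpoint potential t :=
  if t is Node l r then (potential l + potential r + tsize r)%N else 0%N.

Lemma rot_step_potential a b : rot_step a b -> (potential a < potential b)%N.
Proof. by elim=> /= [* | * | l r r' /rot_step_tsize -> *]; lia. Qed.

Lemma tamari_potential a b : tle a b -> (potential a <= potential b)%N.
Proof.
elim=> [x y /rot_step_potential/ltnW | // | x y z _ H1 _ H2] //.
exact: leq_trans H1 H2.
Qed.

Lemma tamari_potential_lt a b : tle a b -> a <> b -> (potential a < potential b)%N.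
Proof.
move/(clos_rt_rt1n _ _ _ _); case=> [// | y z /rot_step_potential ay yz _].
exact: leq_trans ay (tamari_potential (clos_rt1n_rt _ _ _ _ yz)).
Qed.

Lemma tamari_lebP s t : reflect (tle s t) (tamari_leb s t).
Proof. by rewrite /tamari_leb; case: excluded_middle_informative; constructor. Qed.

Lemma tsize_under r s : tsize (under r s) = (tsize r + tsize s)%N.
Proof. by elim: r => //= a _ b ->; lia. Qed.

Lemma underA a b c : under (under a b) c = under a (under b c).
Proof. by elim: a => //= x _ y ->. Qed.

Lemma tamari_underr s t t' : tle t t' -> tle (under s t) (under s t').
Proof. by elim: s => //= l _ r IH /IH; apply: tamari_noder. Qed.

Lemma tamari_underl s s' t : tle s s' -> tle (under s t) (under s' t).
Proof.
apply: (tamari_homo (f := under^~ t)) => u v.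
elim=> /= [a b c | l l' r ll' _ | l r r' _ rr'].
- exact: tamari_rot.
- exact/tamari_nodel/rt_step.
- exact: tamari_noder.
Qed.

Lemma tamari_Node_under a b r : tle (Node (under a b) r) (under a (Node b r)).
Proof.
elim: a => /= [|a1 _ a2 IH]; first exact: tamari_refl.
by apply: tamari_trans (tamari_rot _ _ _) _; apply: tamari_noder.
Qed.

Lemma tamari_under_split u i : tle u (under (split_at u i).1 (split_at u i).2).
Proof.
elim: u i => /= [|l IHl r IHr] i; first exact: tamari_refl.
case: ifP => _.
  have := IHl i; case: (split_at l i) => a b /= lab.
  exact: tamari_trans (tamari_nodel _ lab) (tamari_Node_under _ _ _).
by have := IHr (i - (tsize l).+1); case: split_at => c d; apply: tamari_noder.
Qed.

Lemma split_at0 t : split_at t 0 = (Leaf, t).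
Proof. by elim: t => //= l IHl r _; rewrite IHl. Qed.

Lemma split_at_under r s : split_at (under r s) (tsize r) = (r, s).
Proof.
elim: r => /= [|a _ b IH]; first exact: split_at0.
rewrite ifN; last lia.
have -> : ((tsize a + tsize b).+1 - (tsize a).+1 = tsize b)%N by lia.
by rewrite IH.
Qed.

Lemma tsize_split_at u i : (i <= tsize u)%N -> tsize (split_at u i).1 = i.
Proof.
elim: u i => [|l IHl r IHr] i /=; first by case: i.
move=> iu; case: ifP => il.
  by have := IHl i il; case: split_at.
by have := IHr (i - (tsize l).+1)%N; case: split_at => c d /= ->; lia.
Qed.

Definition tamari_le2 (p q : tree * tree) := tle p.1 q.1 /\ tle p.2 q.2.

Lemma split_at_rot a b i : rot_step a b -> tamari_le2 (split_at a i) (split_at b i).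
Proof.
rewrite /tamari_le2; move: a b => u v uv.
elim: uv i => [x y z | l l' r ll' IH | l r r' rr' IH] i /=.
- case: (leqP i (tsize x + tsize y).+1) => ixy.
    case: (leqP i (tsize x)) => ix.
      by case: split_at => a0 a1; split; [apply: tamari_refl | apply: tamari_rot].
    rewrite ifT; last lia.
    by case: split_at => b0 b1; split; apply: tamari_refl.
  rewrite !ifN; [|lia|lia].
  have -> : (i - (tsize x).+1 - (tsize y).+1 = i - (tsize x + tsize y).+2)%N by lia.
  by case: split_at => c0 c1; split; [apply: tamari_rot | apply: tamari_refl].
- rewrite (rot_step_tsize ll'); case: ifP => _.
    have := IH i; case: (split_at l i) => a b; case: (split_at l' i) => a' b' /= [aa' bb'].
    by split; last apply: tamari_nodel.
  by case: split_at => c d /=; split; [apply/tamari_nodel/rt_step | apply: tamari_refl].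
- case: ifP => _.
    by case: split_at => a b /=; split; [apply: tamari_refl | apply/tamari_noder/rt_step].
  have := IH (i - (tsize l).+1).
  case: (split_at r _) => c d; case: (split_at r' _) => c' d' /= [cc' dd'].
  by split; first apply: tamari_noder.
Qed.

Lemma split_at_tamari a b i : tle a b -> tamari_le2 (split_at a i) (split_at b i).
Proof.
elim=> [x y /split_at_rot // | x | x y z _ [H1 H2] _ [H3 H4]].
  by split; apply: tamari_refl.
by split; [apply: tamari_trans H1 H3 | apply: tamari_trans H2 H4].
Qed.

Lemma tamari_le_under u r s :
  tle u (under r s) <-> tamari_le2 (split_at u (tsize r)) (r, s).
Proof.
split; first by move/(split_at_tamari (tsize r)); rewrite split_at_under.
case=> /= ur us; apply: tamari_trans (tamari_under_split u (tsize r)) _.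
exact: tamari_trans (tamari_underl _ ur) (tamari_underr _ us).
Qed.

(** * Progressive decomposition *)

Lemma all_take (T : Type) (a : pred T) n s : all a s -> all a (take n s).
Proof. by rewrite -{1}(cat_take_drop n s) all_cat => /andP[]. Qed.

Lemma all_drop (T : Type) (a : pred T) n s : all a s -> all a (drop n s).
Proof. by rewrite -{1}(cat_take_drop n s) all_cat => /andP[]. Qed.

Definition under_seq (ps : seq tree) : tree := foldr under Leaf ps.

Lemma under_seq_cat xs ys : under_seq (xs ++ ys) = under (under_seq xs) (under_seq ys).
Proof. by elim: xs => //= x xs ->; rewrite underA. Qed.

Lemma prog_decomp_under r s : prog_decomp (under r s) = prog_decomp r ++ prog_decomp s.
Proof. by elim: r => //= a _ b ->. Qed.

Lemma prog_decompK : cancel prog_decomp under_seq.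
Proof. by elim=> //= a _ b ->. Qed.

Lemma all_progressive_decomp t : all progressive (prog_decomp t).
Proof. by elim: t. Qed.

Lemma under_seqK ps : all progressive ps -> prog_decomp (under_seq ps) = ps.
Proof.
elim: ps => //= -[// | a [] //] ps IH /IH <-.
by rewrite /= prog_decompK.
Qed.

Lemma inYk_under_seq k ps : all progressive ps -> inYk k (under_seq ps) = (size ps == k).
Proof. by move=> ps_prog; rewrite /inYk under_seqK. Qed.

Lemma inYk1 t : inYk 1 t = progressive t.
Proof. by case: t => // a [] //= b c; rewrite /inYk /=; case: (prog_decomp c). Qed.

Lemma size_trees_upto n : size (trees_upto n) = n.+1.
Proof. by elim: n => //= n IH; rewrite size_rcons IH. Qed.

Lemma nth_trees_upto n m : (m <= n)%N -> nth [::] (trees_upto n) m = trees m.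
Proof.
elim: n => [|n IH] mn; first by case: m mn.
case: (ltnP m n.+1) => mn'; last by have -> : m = n.+1 by lia.
by rewrite /= nth_rcons size_trees_upto mn' IH.
Qed.

Lemma treesS n : trees n.+1 =
  flatten [seq [seq Node l r | l <- trees i, r <- trees (n - i)] | i <- iota 0 n.+1].
Proof.
rewrite {1}/trees; have -> : trees_upto n.+1 = rcons (trees_upto n)
   (flatten [seq [seq Node l r | l <- nth [::] (trees_upto n) i,
                                   r <- nth [::] (trees_upto n) (n - i)]
                | i <- iota 0 n.+1]) by [].
rewrite nth_rcons size_trees_upto ltnn eqxx.
congr flatten; apply/eq_in_map => i; rewrite mem_iota => /andP[_ ilt].
by rewrite !nth_trees_upto //; lia.
Qed.

Lemma count_mem_allpairs_Node l r A B :
  count_mem (Node l r) [seq Node a b | a <- A, b <- B] =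
  (count_mem l A * count_mem r B)%N.
Proof.
elim: A => //= a A IH; rewrite count_cat IH count_map mulnDl; congr (_ + _)%N.
case: (eqVneq a l) => [-> | al] /=.
  by rewrite mul1n; apply: eq_count => b /=; apply/eqP/eqP => [[->] | ->].
rewrite mul0n; apply/eqP; rewrite -leqn0 leqNgt -has_count.
by apply/hasP => -[b _ /= /eqP[/eqP]]; rewrite (negPf al).
Qed.

Lemma count_mem_trees t n : count_mem t (trees n) = (tsize t == n).
Proof.
elim: t n => [|l IHl r IHr] [|n] //.
  rewrite treesS count_flatten -map_comp sumnE big_map big1_seq // => i _ /=.
  by apply/eqP; rewrite -leqn0 leqNgt -has_count;
    apply/hasP => -[x /allpairsP[[a b] [_ _ ->]]].
rewrite treesS count_flatten -map_comp sumnE big_map.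
under eq_bigr do rewrite /= count_mem_allpairs_Node IHl IHr.
case: (ltnP (tsize l) n.+1) => ln; last first.
  rewrite big1_seq => [|i]; first by rewrite /=; apply/esym/eqP; lia.
  by rewrite mem_iota => /andP[_ ?]; rewrite (_ : tsize l == i = false) //; lia.
rewrite (bigD1_seq (tsize l)) ?iota_uniq //; last by rewrite mem_iota; lia.
rewrite eqxx mul1n big1 ?addn0 => [|i /negPf]; last by rewrite eq_sym => ->.
by apply/eqP; case: eqP => /= ?; apply/eqP; lia.
Qed.

Lemma mem_trees t n : (t \in trees n) = (tsize t == n).
Proof. by rewrite -has_pred1 has_count count_mem_trees; case: (_ == _). Qed.

Lemma uniq_trees n : uniq (trees n).
Proof. by apply: count_mem_uniq => t; rewrite count_mem_trees mem_trees. Qed.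

Local Open Scope ring_scope.

Section LinearExtension.
Context {K : choiceType} {V : lmodType rat}.

Definition linext (g : K -> V) (x : {malg rat[K]}) : V :=
  \sum_(k <- msupp x) x@_k *: g k.

Lemma linextEw g x (d : {fset K}) :
  (msupp x `<=` d)%fset -> linext g x = \sum_(k <- d) x@_k *: g k.
Proof.
by move=> xd; apply: big_fset_incl => // k _ /mcoeff_outdom ->; rewrite scale0r.
Qed.

Lemma linext_is_linear g : linear (linext g).
Proof.
move=> c x y; pose d := (msupp x `|` msupp y)%fset.
have cxy : (msupp (c *: x + y) `<=` d)%fset.
  by apply: fsubset_trans (msuppD_le _ _) _; apply/fsetSU/msuppZ_le.
rewrite (linextEw g cxy) (linextEw g (fsubsetUl (msupp x) (msupp y))).
rewrite (linextEw g (fsubsetUr (msupp x) (msupp y))).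
rewrite scaler_sumr -big_split; apply: eq_bigr => k _.
by rewrite mcoeffD mcoeffZ scalerDl scalerA.
Qed.

HB.instance Definition _ g :=
  GRing.isLinear.Build rat {malg rat[K]} V *:%R (linext g) (linext_is_linear g).

Lemma mcoeff_bas (k k' : K) : (bas k)@_k' = (k == k')%:R.
Proof. by rewrite /bas mcoeffU. Qed.

Lemma linext_bas g k : linext g (bas k) = g k.
Proof.
by rewrite /linext /bas msuppU oner_eq0 big_seq_fset1 mcoeffUU scale1r.
Qed.

Lemma eq_in_linext g1 g2 x :
  {in msupp x, g1 =1 g2} -> linext g1 x = linext g2 x.
Proof. by move=> g12; rewrite /linext !big_seq; apply: eq_bigr => k /g12 ->. Qed.

Lemma eq_linext g1 g2 x : g1 =1 g2 -> linext g1 x = linext g2 x.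
Proof. by move=> g12; apply: eq_in_linext => k _. Qed.

End LinearExtension.

Section LinearExtensionTheory.
Context {K : choiceType}.

Lemma linext_comp {V W : lmodType rat} (f : {linear V -> W}) (g : K -> V) x :
  f (linext g x) = linext (f \o g) x.
Proof. by rewrite linear_sum; apply: eq_bigr => k _; rewrite linearZ. Qed.

Lemma linext_basK (x : {malg rat[K]}) : linext bas x = x.
Proof.
rewrite [RHS]monalgE; apply: eq_bigr => k _.
by apply/malgP => k'; rewrite mcoeffZ !mcoeffU mulr_natr.
Qed.

Lemma linext_linext {K' : choiceType} {W : lmodType rat} (h : K' -> W)
    (g : K -> {malg rat[K']}) x :
  linext h (linext g x) = linext (linext h \o g) x.
Proof. exact: (linext_comp (linext h)). Qed.

Lemma mcoeff_linext {K' : choiceType} (g : K -> {malg rat[K']}) x k :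
  (linext g x)@_k = \sum_(w <- msupp x) x@_w * (g w)@_k.
Proof. by rewrite raddf_sum; apply: eq_bigr => w _; rewrite /= mcoeffZ. Qed.

Lemma sum_mcoeff_eq (x : {malg rat[K]}) k :
  \sum_(a <- msupp x) x@_a * (a == k)%:R = x@_k.
Proof.
rewrite -[RHS](congr1 (mcoeff k) (linext_basK x)) mcoeff_linext.
by under [RHS]eq_bigr do rewrite mcoeff_bas.
Qed.

End LinearExtensionTheory.

Lemma linext_swap {A B : choiceType} {W : lmodType rat} (G : A -> B -> W) x y :
  linext (fun b => linext (G^~ b) x) y = linext (fun a => linext (G a) y) x.
Proof.
rewrite /linext; under eq_bigr do rewrite scaler_sumr.
rewrite exchange_big; apply: eq_bigr => a _; rewrite scaler_sumr.
by apply: eq_bigr => b _; rewrite !scalerA mulrC.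
Qed.

Definition bilext {A B C : choiceType} (h : A -> B -> C)
    (x : {malg rat[A]}) (y : {malg rat[B]}) : {malg rat[C]} :=
  \sum_(a <- msupp x) \sum_(b <- msupp y) (x@_a * y@_b) *: bas (h a b).

Section BilinearExtension.
Context {A B C : choiceType} (h : A -> B -> C).

Lemma bilextE x y : bilext h x y = linext (fun a => linext (bas \o h a) y) x.
Proof.
apply: eq_bigr => a _; rewrite scaler_sumr; apply: eq_bigr => b _.
by rewrite scalerA.
Qed.

Lemma bilextEr x y : bilext h x y = linext (fun b => linext (bas \o h^~ b) x) y.
Proof. by rewrite bilextE linext_swap. Qed.

Lemma bilext_bas a b : bilext h (bas a) (bas b) = bas (h a b).
Proof. by rewrite bilextE !linext_bas. Qed.

Lemma linear_bilext {W : lmodType rat} (L : {linear {malg rat[C]} -> W}) x y :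
  L (bilext h x y) = linext (fun a => linext (fun b => L (bas (h a b))) y) x.
Proof.
by rewrite bilextE linext_comp; apply: eq_linext => a; rewrite /= linext_comp.
Qed.

Lemma bilext_linextl {A' : choiceType} (g : A' -> {malg rat[A]}) x y :
  bilext h (linext g x) y = linext (fun a => bilext h (g a) y) x.
Proof.
by rewrite bilextE linext_linext; apply: eq_linext => a; rewrite /= bilextE.
Qed.

Lemma bilext_linextr {B' : choiceType} (g : B' -> {malg rat[B]}) x y :
  bilext h x (linext g y) = linext (fun b => bilext h x (g b)) y.
Proof.
by rewrite bilextEr linext_linext; apply: eq_linext => b; rewrite /= bilextEr.
Qed.

Lemma mcoeff_bilext x y c :
  (bilext h x y)@_c =
  \sum_(a <- msupp x) \sum_(b <- msupp y) x@_a * y@_b * (h a b == c)%:R.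
Proof.
rewrite raddf_sum; apply: eq_bigr => a _; rewrite raddf_sum.
by apply: eq_bigr => b _; rewrite /= mcoeffZ mcoeff_bas.
Qed.

Lemma mcoeff_bilext_inj x y a0 b0 :
  (forall a b, (h a b == h a0 b0) = (a == a0) && (b == b0)) ->
  (bilext h x y)@_(h a0 b0) = x@_a0 * y@_b0.
Proof.
move=> h_inj; rewrite mcoeff_bilext -(sum_mcoeff_eq x a0) mulr_suml.
apply: eq_bigr => a _; rewrite -(sum_mcoeff_eq y b0) !mulr_sumr.
apply: eq_bigr => b _; rewrite h_inj.
by case: (a == a0); case: (b == b0); rewrite /= ?(mulr0, mul0r, mulr1).
Qed.

End BilinearExtension.

Lemma tensE (A B : choiceType) (x : {malg rat[A]}) (y : {malg rat[B]}) :
  tens x y = bilext pair x y.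
Proof. by []. Qed.

Lemma mcoeff_tens (A B : choiceType) (x : {malg rat[A]}) (y : {malg rat[B]}) a b :
  (tens x y)@_(a, b) = x@_a * y@_b.
Proof. by rewrite tensE mcoeff_bilext_inj // => a' b'; rewrite xpair_eqE. Qed.

Section Span.
Context {V : lmodType rat} (P : V -> Prop).

Lemma inspan_ind (Q : V -> Prop) :
  Q 0 -> (forall a b, Q a -> Q b -> Q (a + b)) -> (forall c a, Q a -> Q (c *: a)) ->
  (forall w, P w -> Q w) -> forall v, inspan P v -> Q v.
Proof.
move=> Q0 QD QZ PQ v [vs [cs [Pvs ->]]].
by apply: (big_ind Q) => // i _; apply/QZ/PQ/Pvs/mem_nth.
Qed.

Lemma inspan0 : inspan P 0.
Proof. by exists [::], [::]; rewrite big_ord0. Qed.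

Lemma inspan1 v : P v -> inspan P v.
Proof.
by exists [:: v], [:: 1]; rewrite big_ord1 scale1r; split=> // w; rewrite inE => /eqP ->.
Qed.

Lemma inspanD a b : inspan P a -> inspan P b -> inspan P (a + b).
Proof.
move=> [vs1 [cs1 [P1 ->]]] [vs2 [cs2 [P2 ->]]].
exists (vs1 ++ vs2), (mkseq (nth 0 cs1) (size vs1) ++ cs2); split.
  by move=> w; rewrite mem_cat => /orP[/P1 | /P2].
rewrite size_cat big_split_ord /=; congr (_ + _); apply: eq_bigr => i _.
  by rewrite !nth_cat size_mkseq ltn_ord nth_mkseq.
by rewrite !nth_cat size_mkseq ltnNge leq_addr /= addKn.
Qed.

Lemma inspanZ c a : inspan P a -> inspan P (c *: a).
Proof.
move=> [vs [cs [Pvs ->]]]; exists vs, (mkseq (fun i => c * cs`_i) (size vs)).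
split=> //; rewrite scaler_sumr; apply: eq_bigr => i _.
by rewrite nth_mkseq // scalerA.
Qed.

Lemma inspan_sum (I : Type) (r : seq I) (Q : pred I) (f : I -> V) :
  (forall i, Q i -> inspan P (f i)) -> inspan P (\sum_(i <- r | Q i) f i).
Proof. by move=> Pf; apply: big_ind => //; [apply: inspan0 | apply: inspanD]. Qed.

End Span.

(** * Moebius inversion *)

Lemma mcoeff_F t t' : (F t)@_t' = (t == t')%:R.
Proof. exact: mcoeff_bas. Qed.

(* By Moebius inversion [F s = \sum_(s <= t) M t], so [up_sum s] is the vector
   of [M]-coordinates of [F s]. *)
Definition up_sum (s : tree) : YSym :=
  \sum_(t <- trees (tsize s) | tamari_leb s t) F t.

Lemma mcoeff_up_sum s t : (up_sum s)@_t = (tamari_leb s t)%:R.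
Proof.
rewrite raddf_sum big_mkcond /=; under eq_bigr do rewrite mcoeff_F.
case: (tamari_lebP s t) => st; last first.
  by rewrite big1 // => u _; case: tamari_lebP => // su; case: eqP => // ut; case: st; rewrite -ut.
rewrite (bigD1_seq t) ?uniq_trees ?mem_trees ?(tamari_tsize st) //=.
rewrite (introT (tamari_lebP _ _) st) eqxx big1 ?addr0 // => u /negPf ->.
by case: ifP.
Qed.

Section MobiusInversion.
Variable n : nat.
Local Notation N := (size (trees n)).
Local Notation tn i := (nth Leaf (trees n) i).
Local Notation Z := (zeta_mx n).

Lemma nth_trees_inj (i j : 'I_N) : (tn i == tn j) = (i == j).
Proof. by rewrite nth_uniq ?uniq_trees. Qed.

Lemma tsize_nth_trees (i : 'I_N) : tsize (tn i) = n.
Proof. by apply/eqP; rewrite -mem_trees mem_nth. Qed.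

Let X : 'M[rat]_N := 1%:M - Z.

Lemma zeta_strict_neq0 i j : X i j != 0 -> (i != j) && tamari_leb (tn i) (tn j).
Proof.
rewrite !mxE; case: (eqVneq i j) => [-> | _] /=; last by case: tamari_leb; rewrite ?subrr ?eqxx.
by case: tamari_lebP => [_ | []]; [rewrite subrr eqxx | apply: tamari_refl].
Qed.

(* Entries of [X ^+ k] come from strict chains of length [k]. *)
Lemma zeta_strict_exp_neq0 k (i j : 'I_N) : (X ^+ k) i j != 0 ->
  tle (tn i) (tn j) /\ (potential (tn i) + k <= potential (tn j))%N.
Proof.
elim: k i j => [|k IH] i j.
  rewrite expr0 -idmxE mxE; case: (eqVneq i j) => [-> _ | _]; last by rewrite eqxx.
  by split; [apply: tamari_refl | rewrite addn0].
rewrite exprSr -mulmxE mxE => /eqP Xij.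
have [l Xil] : exists l, (X ^+ k) i l * X l j != 0.
  by apply/existsP; apply: contraT; rewrite negb_exists => /forallP Xi0;
    case: Xij; apply: big1 => l _; apply/eqP/negbNE.
move: Xil; rewrite mulf_eq0 negb_or => /andP[/IH[il il_pot] /zeta_strict_neq0].
case/andP; rewrite -nth_trees_inj => /eqP lj /tamari_lebP lj_le.
split; first exact: tamari_trans il lj_le.
by have := tamari_potential_lt lj_le lj; lia.
Qed.

Let B := (\max_(j < N) potential (tn j)).+1.

Lemma zeta_strict_nilpotent : X ^+ B = 0.
Proof.
apply/matrixP => i j; rewrite mxE; apply/eqP; apply: contraT.
move/zeta_strict_exp_neq0 => [_]; rewrite /B.
have := @leq_bigmax _ (fun j : 'I_N => potential (tn j)) j.
by set m := \max_(_ < _) _; lia.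
Qed.

Let zeta_inv := \sum_(k < B) X ^+ k.

Lemma mul_zeta_inv : Z *m zeta_inv = 1%:M.
Proof.
have -> : Z = 1 - X by rewrite /X idmxE opprB addrC subrK.
by rewrite mulmxE idmxE -opprB mulNr -subrX1 zeta_strict_nilpotent opprB subr0.
Qed.

Lemma zeta_mx_unit : Z \in unitmx.
Proof. exact: (mulmx1_unit mul_zeta_inv).1. Qed.

Lemma invmx_zeta_neq0 i j : invmx Z i j != 0 -> tamari_leb (tn i) (tn j).
Proof.
have -> : invmx Z = zeta_inv.
  by rewrite -[RHS]mul1mx -(mulVmx zeta_mx_unit) -mulmxA mul_zeta_inv mulmx1.
rewrite summxE => /eqP Zij; apply/tamari_lebP.
have [k Xk] : exists k : 'I_B, (X ^+ k) i j != 0.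
  by apply/existsP; apply: contraT; rewrite negb_exists => /forallP X0;
    case: Zij; apply: big1 => k _; apply/eqP/negbNE.
by case: (zeta_strict_exp_neq0 Xk).
Qed.

Lemma mobius_nth (i j : 'I_N) : mobius n (tn i) (tn j) = invmx Z i j.
Proof.
rewrite /mobius (bigD1 i) //= [X in _ + X]big1 ?addr0 => [|i' i'i]; last first.
  by rewrite big1 // => j' _; rewrite nth_trees_inj (negPf i'i) mul0r.
rewrite (bigD1 j) //= !nth_trees_inj !eqxx mul1r [X in _ + X]big1 ?addr0 // => j' j'j.
by rewrite nth_trees_inj (negPf j'j) mul0r.
Qed.

Definition row_comb (A : 'M[rat]_N) (i : 'I_N) : YSym := \sum_(j < N) A i j *: F (tn j).

Lemma up_sum_nth (i : 'I_N) : up_sum (tn i) = row_comb Z i.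
Proof.
rewrite /up_sum tsize_nth_trees (big_nth Leaf) big_mkord big_mkcond.
by apply: eq_bigr => j _; rewrite mxE; case: tamari_leb; rewrite ?scale1r ?scale0r.
Qed.

Lemma M_nth (i : 'I_N) : M (tn i) = row_comb (invmx Z) i.
Proof.
rewrite /M tsize_nth_trees (big_nth Leaf) big_mkord big_mkcond.
apply: eq_bigr => j _; rewrite mobius_nth.
case: (eqVneq (invmx Z i j) 0) => [-> | /invmx_zeta_neq0 -> //].
by case: ifP; rewrite scale0r.
Qed.

Lemma linext_row_comb (g : tree -> YSym) (C : 'M[rat]_N) :
    (forall j : 'I_N, g (tn j) = row_comb C j) ->
  forall A (i : 'I_N), linext g (row_comb A i) = row_comb (A *m C) i.
Proof.
move=> gC A i; rewrite linear_sum; under eq_bigr do rewrite linearZ /= linext_bas gC.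
under eq_bigr do rewrite scaler_sumr.
rewrite exchange_big; apply: eq_bigr => k _.
by rewrite mxE scaler_suml; apply: eq_bigr => j _; rewrite scalerA.
Qed.

Lemma row_comb1 (i : 'I_N) : row_comb 1%:M i = F (tn i).
Proof.
rewrite /row_comb (bigD1 i) //= big1 ?addr0 => [|k ki]; first by rewrite mxE eqxx scale1r.
by rewrite mxE eq_sym (negPf ki) scale0r.
Qed.

End MobiusInversion.

Lemma nth_trees_tsize s :
  exists i : 'I_(size (trees (tsize s))), nth Leaf (trees (tsize s)) i = s.
Proof.
have si : (index s (trees (tsize s)) < size (trees (tsize s)))%N.
  by rewrite index_mem mem_trees.
by exists (Ordinal si); rewrite /= nth_index // mem_trees.
Qed.

Lemma linext_M_up_sum s : linext M (up_sum s) = F s.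
Proof.
have [i <-] := nth_trees_tsize s.
by rewrite up_sum_nth (linext_row_comb (@M_nth _)) mulmxV ?zeta_mx_unit ?row_comb1.
Qed.

Lemma linext_up_sum_M s : linext up_sum (M s) = F s.
Proof.
have [i <-] := nth_trees_tsize s.
by rewrite M_nth (linext_row_comb (@up_sum_nth _)) mulVmx ?zeta_mx_unit ?row_comb1.
Qed.

(** * The grading and the coproduct on the monomial basis *)

(* [coordM x] is the vector of [M]-coordinates of [x]. *)
Definition coordM : YSym -> YSym := linext up_sum.
Definition ofM : YSym -> YSym := linext M.
HB.instance Definition _ := GRing.Linear.copy coordM (linext up_sum).
HB.instance Definition _ := GRing.Linear.copy ofM (linext M).

Lemma ofM_coordM x : ofM (coordM x) = x.
Proof. by rewrite /ofM /coordM linext_linext (eq_linext _ linext_M_up_sum) linext_basK. Qed.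

Lemma coordM_ofM y : coordM (ofM y) = y.
Proof. by rewrite /ofM /coordM linext_linext (eq_linext _ linext_up_sum_M) linext_basK. Qed.

Lemma coordM_M t : coordM (M t) = F t.
Proof. exact: linext_up_sum_M. Qed.

Lemma ofM_F t : ofM (F t) = M t.
Proof. exact: linext_bas. Qed.

Lemma YSymkE k x : YSymk k x <-> forall t, ~~ inYk k t -> (coordM x)@_t = 0.
Proof.
split.
  move=> Yx t tk; move: x Yx; apply: inspan_ind.
  - by rewrite linear0 mcoeff0.
  - by move=> a b xa xb; rewrite linearD mcoeffD xa xb addr0.
  - by move=> c a xa; rewrite linearZ mcoeffZ xa mulr0.
  move=> _ [u [uk ->]]; rewrite coordM_M mcoeff_F.
  by case: eqP tk uk => // -> /negPf ->.
move=> x0; rewrite -(ofM_coordM x) /ofM /linext big_seq; apply: inspan_sum => t.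
rewrite -mcoeff_neq0 => xt; apply/inspanZ/inspan1; exists t; split=> //.
by apply: contraNT xt => /x0 ->; rewrite eqxx.
Qed.

Lemma homogeneous_decomposition x : exists xs : seq YSym,
  (forall k, (k < size xs)%N -> YSymk k xs`_k) /\ x = \sum_(k < size xs) xs`_k.
Proof.
pose y := coordM x; pose K := (\max_(t <- msupp y) size (prog_decomp t)).+1.
pose xk k := \sum_(t <- msupp y | inYk k t) y@_t *: M t.
exists (mkseq xk K); rewrite size_mkseq; split.
  move=> k kK; rewrite nth_mkseq //; apply: inspan_sum => t tk.
  by apply/inspanZ/inspan1; exists t.
under eq_bigr do rewrite nth_mkseq //.
rewrite /xk (exchange_big_dep xpredT) //= -[LHS]ofM_coordM -/y; apply: eq_big_seq => t yt.
have tK : (size (prog_decomp t) < K)%N.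
  by rewrite ltnS; apply: (leq_bigmax_seq (F := fun t => size (prog_decomp t))).
rewrite (bigD1 (Ordinal tK)) ?/inYk //= big1 ?addr0 // => k /andP[/eqP tk].
by rewrite -val_eqE /= tk eqxx.
Qed.

Lemma homogeneous_sum_eq0 (xs : seq YSym) :
    (forall k, (k < size xs)%N -> YSymk k xs`_k) -> \sum_(k < size xs) xs`_k = 0 ->
  forall k, (k < size xs)%N -> xs`_k = 0.
Proof.
move=> xsY xs0 k kxs; rewrite -(ofM_coordM xs`_k).
suff -> : coordM xs`_k = 0 by rewrite linear0.
apply/malgP => t; rewrite mcoeff0.
case: (boolP (inYk k t)) => tk; last exact: ((YSymkE _ _).1 (xsY k kxs) t tk).
have := congr1 (mcoeff t \o coordM) xs0; rewrite /= linear0 mcoeff0 linear_sum raddf_sum.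
rewrite (bigD1 (Ordinal kxs)) //= big1 ?addr0 // => j jk.
apply: ((YSymkE _ _).1 (xsY j (ltn_ord j)) t).
by move: tk jk; rewrite /inYk => /eqP ->; rewrite -val_eqE eq_sym.
Qed.

Definition coordM2 : YSym2 -> YSym2 := linext (fun p => tens (up_sum p.1) (up_sum p.2)).
Definition ofM2 : YSym2 -> YSym2 := linext (fun p => tens (M p.1) (M p.2)).

Lemma ofM2_tens x y : ofM2 (tens x y) = tens (ofM x) (ofM y).
Proof.
rewrite /ofM2 /ofM !tensE linear_bilext bilext_linextl; apply: eq_linext => a.
by rewrite bilext_linextr; apply: eq_linext => b; rewrite /= linext_bas.
Qed.

Lemma ofM2_coordM2 z : ofM2 (coordM2 z) = z.
Proof.
rewrite /ofM2 /coordM2 linext_linext -[RHS]linext_basK; apply: eq_linext => -[a b] /=.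
by rewrite -/ofM2 ofM2_tens /ofM !linext_M_up_sum tensE bilext_bas.
Qed.

(* [Delta (M t)] in [M]-coordinates, see [Delta_M_under_seq]. *)
Definition prog_deconc (t : tree) : YSym2 :=
  let ps := prog_decomp t in
  \sum_(j < (size ps).+1) bas (under_seq (take j ps), under_seq (drop j ps)).

Lemma mcoeff_prog_deconc t r s : (prog_deconc t)@_(r, s) = (t == under r s)%:R.
Proof.
rewrite raddf_sum /=; under eq_bigr do rewrite mcoeff_bas.
set ps := prog_decomp t; have ps_prog : all progressive ps := all_progressive_decomp t.
case: (eqVneq t (under r s)) => [trs | trs]; last first.
  rewrite big1 // => j _; case: eqP => // -[tj dj]; move: trs.
  by rewrite -tj -dj -under_seq_cat cat_take_drop prog_decompK eqxx.
have ps_cat : ps = prog_decomp r ++ prog_decomp s by rewrite /ps trs prog_decomp_under.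
have rj : (size (prog_decomp r) < (size ps).+1)%N by rewrite ps_cat size_cat; lia.
have take_r : take (size (prog_decomp r)) ps = prog_decomp r by rewrite ps_cat take_size_cat.
have drop_r : drop (size (prog_decomp r)) ps = prog_decomp s by rewrite ps_cat drop_size_cat.
rewrite (bigD1 (Ordinal rj)) //= take_r drop_r !prog_decompK eqxx big1 ?addr0 //.
move=> j jr; case: eqP => // -[rj_eq _]; move: jr.
rewrite -val_eqE /= -rj_eq under_seqK ?all_take //.
by rewrite size_take; case: ltnP => jps; have := ltn_ord j; lia.
Qed.

Lemma tamari_leb_split_at u r s i : (i <= tsize u)%N ->
  tamari_leb (split_at u i).1 r && tamari_leb (split_at u i).2 s =
  (i == tsize r) && tamari_leb u (under r s).
Proof.
move=> iu; case: (eqVneq i (tsize r)) => [-> | ir] /=.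
  apply/andP/tamari_lebP => [[/tamari_lebP ur /tamari_lebP us] | /tamari_le_under[ur us]].
    exact/tamari_le_under.
  by split; apply/tamari_lebP.
apply/negbTE/negP => /andP[/tamari_lebP/tamari_tsize].
by rewrite tsize_split_at // => ri; rewrite ri eqxx in ir.
Qed.

(* In [M]-coordinates the coproduct of [F u] is read off from [tamari_le_under]. *)
Lemma coordM2_DeltaF u : coordM2 (DeltaF u) = linext prog_deconc (up_sum u).
Proof.
apply/malgP => -[r s]; rewrite /coordM2 [RHS]mcoeff_linext.
under [RHS]eq_bigr do rewrite mcoeff_prog_deconc.
rewrite sum_mcoeff_eq mcoeff_up_sum /DeltaF linear_sum raddf_sum.
under eq_bigr => i _ do rewrite /= linext_bas mcoeff_tens !mcoeff_up_sum -natrM mulnb.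
under eq_bigr => i _ do rewrite (tamari_leb_split_at r s (ltn_ord i)).
case: (tamari_lebP u (under r s)) => urs; last by rewrite big1 // => i _; rewrite andbF.
have ru : (tsize r < (tsize u).+1)%N by rewrite (tamari_tsize urs) tsize_under; lia.
rewrite (bigD1 (Ordinal ru)) //= eqxx big1 ?addr0 // => i /negPf.
by rewrite -val_eqE /= andbT => ->.
Qed.

HB.instance Definition _ := GRing.Linear.copy Delta (linext DeltaF).

Lemma coordM2_Delta x : coordM2 (Delta x) = linext prog_deconc (coordM x).
Proof.
rewrite /coordM2 /coordM !linext_linext; apply: eq_linext => u /=.
exact: coordM2_DeltaF.
Qed.

Lemma Delta_M_under_seq ps : all progressive ps ->
  Delta (M (under_seq ps)) =
  \sum_(j < (size ps).+1) tens (M (under_seq (take j ps))) (M (under_seq (drop j ps))).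
Proof.
move=> ps_prog; rewrite -[LHS]ofM2_coordM2 coordM2_Delta coordM_M linext_bas.
rewrite /prog_deconc under_seqK // /ofM2 linear_sum.
by apply: eq_bigr => j _; rewrite /= linext_bas.
Qed.

Lemma M_Leaf : M Leaf = F Leaf.
Proof.
have up_Leaf : up_sum Leaf = F Leaf.
  by rewrite /up_sum /= big_cons big_nil (introT (tamari_lebP _ _) (tamari_refl _)) addr0.
by rewrite -linext_M_up_sum up_Leaf linext_bas.
Qed.

Lemma mcoeff_M_Leaf t : (M t)@_Leaf = (t == Leaf)%:R.
Proof.
case: (eqVneq t Leaf) => [-> | tL]; first by rewrite M_Leaf mcoeff_F.
rewrite raddf_sum big1_seq // => s /andP[_]; rewrite mem_trees /= mcoeffZ mcoeff_F.
by case: (eqVneq s Leaf) => [-> | _]; [case: t tL | rewrite mulr0].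
Qed.

Lemma Delta_YSymk k x : YSymk k x -> YSymk2 k (Delta x).
Proof.
move: x; apply: inspan_ind => [|a b | c a | _ [t [tk ->]]].
- by rewrite linear0; apply: inspan0.
- by rewrite linearD; apply: inspanD.
- by rewrite linearZ; apply: inspanZ.
have ps_prog := all_progressive_decomp t; move: tk; rewrite -(prog_decompK t) /inYk.
rewrite under_seqK // => /eqP <-; set ps := prog_decomp t in ps_prog *.
rewrite Delta_M_under_seq //; apply: inspan_sum => j _; apply: inspan1.
exists j, (size ps - j)%N, (M (under_seq (take j ps))), (M (under_seq (drop j ps))).
split; first by have := ltn_ord j; lia.
split; [|split=> //]; apply: inspan1; eexists; (split; last reflexivity).
  rewrite inYk_under_seq ?all_take // size_take.
  by case: ltnP => *; have := ltn_ord j; lia.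
by rewrite inYk_under_seq ?all_drop // size_drop.
Qed.

Lemma eps_YSymk k x : (0 < k)%N -> YSymk k x -> eps x = 0.
Proof.
move=> k_gt0; move: x; apply: inspan_ind; rewrite /eps.
- exact: mcoeff0.
- by move=> a b xa xb; rewrite mcoeffD xa xb addr0.
- by move=> c a xa; rewrite mcoeffZ xa mulr0.
by move=> _ [t [tk ->]]; rewrite mcoeff_M_Leaf; case: t tk => //; rewrite /inYk; case: k k_gt0.
Qed.

(** * The tensor coalgebra *)

Lemma tensn_cons v vs : tensn (v :: vs) = bilext cons v (tensn vs).
Proof. by []. Qed.

Lemma tensn_map_bas w : tensn (map bas w) = bas w.
Proof. by elim: w => //= a w IH; rewrite IH -/(bilext cons _ _) bilext_bas. Qed.

Definition tmap (g : tree -> YSym) : TY -> TY := linext (fun w => tensn (map g w)).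
HB.instance Definition _ g := GRing.Linear.copy (tmap g) (linext (fun w => tensn (map g w))).

Lemma tmap_tensn g vs : tmap g (tensn vs) = tensn (map (linext g) vs).
Proof.
elim: vs => [|v vs IH]; first by rewrite /tmap linext_bas.
rewrite !tensn_cons -IH /tmap linear_bilext bilext_linextl; apply: eq_linext => a.
by rewrite bilext_linextr; apply: eq_linext => w; rewrite /= linext_bas.
Qed.

Lemma tmap_bas g w : tmap g (bas w) = tensn (map g w).
Proof. exact: linext_bas. Qed.

Definition coordT : TY -> TY := tmap up_sum.
Definition ofT : TY -> TY := tmap M.
HB.instance Definition _ := GRing.Linear.on coordT.
HB.instance Definition _ := GRing.Linear.on ofT.

Lemma tmapK g g' : (forall t, linext g' (g t) = F t) -> cancel (tmap g) (tmap g').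
Proof.
move=> gK z; rewrite [tmap g z]/tmap linext_comp -[RHS]linext_basK; apply: eq_linext => w /=.
by rewrite tmap_tensn -map_comp (eq_map gK) tensn_map_bas.
Qed.

Lemma ofT_coordT z : ofT (coordT z) = z.
Proof. exact: tmapK linext_M_up_sum z. Qed.

Lemma coordT_ofT z : coordT (ofT z) = z.
Proof. exact: tmapK linext_up_sum_M z. Qed.

Fixpoint tensn_coef (vs : seq YSym) (w : seq tree) : rat :=
  match vs, w with
  | [::], [::] => 1
  | v :: vs', a :: w' => v@_a * tensn_coef vs' w'
  | _, _ => 0
  end.

Lemma mcoeff_tensn vs w : (tensn vs)@_w = tensn_coef vs w.
Proof.
elim: vs w => [|v vs IH] [|a w] /=; rewrite ?mcoeff_bas // -/(bilext cons _ _).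
  by rewrite mcoeff_bilext big1 // => b _; rewrite big1 // => c _; rewrite mulr0.
by rewrite mcoeff_bilext_inj ?IH // => b c; rewrite eqseq_cons.
Qed.

Lemma tensn_coef_size vs w : size w != size vs -> tensn_coef vs w = 0.
Proof. by elim: vs w => [|v vs IH] [|a w] //= ws; rewrite IH ?mulr0. Qed.

Lemma tensn_coef_cat vs1 vs2 w1 w2 : size w1 = size vs1 ->
  tensn_coef (vs1 ++ vs2) (w1 ++ w2) = tensn_coef vs1 w1 * tensn_coef vs2 w2.
Proof.
elim: vs1 w1 => [|v vs IH] [|a w] //= ws; first by rewrite mul1r.
by rewrite IH ?mulrA //; case: ws.
Qed.

Lemma tensn_coef_split vs w1 w2 : tensn_coef vs (w1 ++ w2) =
  \sum_(j < (size vs).+1) tensn_coef (take j vs) w1 * tensn_coef (drop j vs) w2.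
Proof.
case: (leqP (size w1) (size vs)) => w1vs; last first.
  rewrite tensn_coef_size ?size_cat; last by apply/eqP; lia.
  rewrite big1 // => j _; rewrite tensn_coef_size ?mul0r // size_take.
  by case: ltnP => *; lia.
have w1j : (size w1 < (size vs).+1)%N by lia.
rewrite (bigD1 (Ordinal w1j)) //= -tensn_coef_cat ?cat_take_drop; last first.
  by rewrite size_take; case: ltnP => *; lia.
rewrite big1 ?addr0 // => j /eqP jw1; rewrite tensn_coef_size ?mul0r //.
apply/eqP => /esym; rewrite size_take => w1_eq; apply: jw1; apply: ord_inj => /=.
by move: w1_eq; case: ltnP => *; have := ltn_ord j; lia.
Qed.

Lemma tensn_coef_eq0 (S : pred tree) vs w :
    (forall v, v \in vs -> forall a, ~~ S a -> v@_a = 0) ->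
  ~~ (all S w && (size w == size vs)) -> tensn_coef vs w = 0.
Proof.
elim: vs w => [|v vs IH] [|a w] //= vsS; rewrite eqSS -andbA negb_and => /orP[Sa | Sw].
  by rewrite (vsS v) ?mem_head ?mul0r.
by rewrite IH ?mulr0 // => v' v'vs; apply: vsS; rewrite inE v'vs orbT.
Qed.

Lemma sum_deconc_eq (w w1 w2 : seq tree) :
  \sum_(i < (size w).+1) ((take i w, drop i w) == (w1, w2))%:R = (w == w1 ++ w2)%:R :> rat.
Proof.
case: (eqVneq w (w1 ++ w2)) => [-> | w12]; last first.
  rewrite big1 // => j _; case: eqP => // -[tj dj].
  by move: w12; rewrite -tj -dj cat_take_drop eqxx.
have w1j : (size w1 < (size (w1 ++ w2)).+1)%N by rewrite size_cat; lia.
rewrite (bigD1 (Ordinal w1j)) //= take_size_cat // drop_size_cat // eqxx.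
rewrite big1 ?addr0 // => j /eqP jw1; case: eqP => // -[take_j _]; case: jw1.
apply: ord_inj => /=; rewrite -[in RHS]take_j size_take.
by case: ltnP => // jw; have := ltn_ord j; lia.
Qed.

Lemma mcoeff_deconc z w1 w2 : (deconc z)@_(w1, w2) = z@_(w1 ++ w2).
Proof.
rewrite raddf_sum /= -sum_mcoeff_eq; apply: eq_bigr => w _.
by rewrite mcoeffZ raddf_sum /=; under eq_bigr do rewrite mcoeff_bas; rewrite sum_deconc_eq.
Qed.

Lemma deconc_tensn vs : deconc (tensn vs) =
  \sum_(j < (size vs).+1) tens (tensn (take j vs)) (tensn (drop j vs)).
Proof.
apply/malgP => -[w1 w2]; rewrite mcoeff_deconc mcoeff_tensn raddf_sum tensn_coef_split.
by apply: eq_bigr => j _; rewrite /= mcoeff_tens !mcoeff_tensn.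
Qed.

(** * Cofreeness *)

Lemma mcoeff_coordT_tpow k z w : tpow (YSymk 1) k z ->
  ~~ (all progressive w && (size w == k)) -> (coordT z)@_w = 0.
Proof.
move=> zk wk; move: z zk; apply: inspan_ind.
- by rewrite linear0 mcoeff0.
- by move=> a b za zb; rewrite linearD mcoeffD za zb addr0.
- by move=> c a za; rewrite linearZ mcoeffZ za mulr0.
move=> _ [vs [vsk [vsV ->]]]; rewrite /coordT tmap_tensn mcoeff_tensn.
apply: (tensn_coef_eq0 (S := progressive)); last by rewrite size_map vsk.
move=> _ /mapP[v /vsV vV ->] a; rewrite -inYk1.
exact: ((YSymkE _ _).1 vV a).
Qed.

Lemma progressive_coordT z w : cofreeQ (YSymk 1) z ->
  w \in msupp (coordT z) -> all progressive w.
Proof.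
move=> zQ; apply: contraTT => w_prog; rewrite -mcoeff_eq0; apply/eqP.
move: z zQ; apply: inspan_ind.
- by rewrite linear0 mcoeff0.
- by move=> a b za zb; rewrite linearD mcoeffD za zb addr0.
- by move=> c a za; rewrite linearZ mcoeffZ za mulr0.
by move=> z [k zk]; rewrite (mcoeff_coordT_tpow zk) // negb_and w_prog.
Qed.

Definition under_word (w : seq tree) : YSym :=
  if all progressive w then F (under_seq w) else 0.
Definition underT : TY -> YSym := linext under_word.
HB.instance Definition _ := GRing.Linear.on underT.

Definition decompT : YSym -> TY := linext (fun t => bas (prog_decomp t)).
HB.instance Definition _ := GRing.Linear.on decompT.

Lemma underT_decompT x : underT (decompT x) = x.
Proof.
rewrite /underT /decompT linext_linext -[RHS]linext_basK; apply: eq_linext => t.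
by rewrite /= linext_bas /under_word all_progressive_decomp prog_decompK.
Qed.

Lemma decompT_underT y : {in msupp y, forall w, all progressive w} ->
  decompT (underT y) = y.
Proof.
move=> y_prog; rewrite /underT /decompT linext_linext -[RHS]linext_basK.
apply: eq_in_linext => w /y_prog w_prog.
by rewrite /= /under_word w_prog linext_bas under_seqK.
Qed.

Definition cofree_iso : {linear TY -> YSym} :=
  GRing.Linear.clone _ _ _ _ (ofM \o underT \o coordT) _.
Arguments cofree_iso : simpl never.

Lemma cofree_isoE z : cofree_iso z = ofM (underT (coordT z)).
Proof. by []. Qed.

Definition cofree_iso_inv (x : YSym) : TY := ofT (decompT (coordM x)).

Lemma cofree_iso_M w : all progressive w -> cofree_iso (tensn (map M w)) = M (under_seq w).
Proof.
move=> w_prog; rewrite cofree_isoE -tmap_bas -/ofT coordT_ofT /underT linext_bas.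
by rewrite /under_word w_prog ofM_F.
Qed.

Lemma cofree_isoK z : cofreeQ (YSymk 1) z -> cofree_iso_inv (cofree_iso z) = z.
Proof.
move=> zQ; rewrite /cofree_iso_inv cofree_isoE coordM_ofM decompT_underT ?ofT_coordT //.
by move=> w; apply: progressive_coordT.
Qed.

Lemma cofree_iso_invK x : cofree_iso (cofree_iso_inv x) = x.
Proof. by rewrite /cofree_iso_inv cofree_isoE coordT_ofT underT_decompT ofM_coordM. Qed.

Lemma cofreeQ_cofree_iso_inv x : cofreeQ (YSymk 1) (cofree_iso_inv x).
Proof.
rewrite /cofree_iso_inv /ofT /tmap /decompT linext_linext {1}/linext.
apply: inspan_sum => t _; apply/inspanZ/inspan1; exists (size (prog_decomp t)).
apply: inspan1; exists (map M (prog_decomp t)); rewrite size_map /= linext_bas.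
split=> //; split=> // _ /mapP[p pt ->]; apply: inspan1; exists p; split=> //.
by rewrite inYk1; apply: (allP (all_progressive_decomp t)).
Qed.

Lemma cofree_iso_graded k z : tpow (YSymk 1) k z -> YSymk k (cofree_iso z).
Proof.
move=> zk; apply/YSymkE => t tk; rewrite cofree_isoE coordM_ofM /underT mcoeff_linext.
rewrite big_seq big1 // => w; rewrite -mcoeff_neq0 => wz.
case/boolP: (all progressive w && (size w == k)) => [/andP[w_prog /eqP wk] | wk].
  rewrite /under_word w_prog mcoeff_F; case: eqP => [wt | _]; last by rewrite mulr0.
  by move: tk; rewrite -wt inYk_under_seq // wk eqxx.
by rewrite (mcoeff_coordT_tpow zk wk) eqxx in wz.
Qed.

HB.instance Definition _ := GRing.Linear.copy deconc
  (linext (fun w : seq tree => \sum_(i < (size w).+1) (bas (take i w, drop i w) : TY2))).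
HB.instance Definition _ (f : TY -> YSym) := GRing.Linear.copy (tensmap f)
  (linext (fun p : seq tree * seq tree => tens (f (bas p.1)) (f (bas p.2)))).

Lemma tensmap_tens (f : {linear TY -> YSym}) x y :
  tensmap f (tens x y) = tens (f x) (f y).
Proof.
rewrite -[x in RHS]linext_basK -[y in RHS]linext_basK !linext_comp.
rewrite [tensmap f _]/tensmap -/(linext _ _) !tensE linear_bilext bilext_linextl.
by apply: eq_linext => a; rewrite bilext_linextr; apply: eq_linext => b; rewrite /= !linext_bas.
Qed.

Lemma cofree_iso_Delta_M w : all progressive w ->
  Delta (cofree_iso (tensn (map M w))) = tensmap cofree_iso (deconc (tensn (map M w))).
Proof.
move=> w_prog; rewrite cofree_iso_M // Delta_M_under_seq // deconc_tensn linear_sum /=.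
rewrite size_map; apply: eq_bigr => j _.
by rewrite tensmap_tens -map_take -map_drop !cofree_iso_M ?all_take ?all_drop.
Qed.

Lemma cofree_iso_Delta z : cofreeQ (YSymk 1) z ->
  Delta (cofree_iso z) = tensmap cofree_iso (deconc z).
Proof.
move=> zQ; rewrite -(ofT_coordT z) /ofT /tmap (linext_comp cofree_iso) (linext_comp Delta).
rewrite (linext_comp deconc) (linext_comp (tensmap cofree_iso)).
apply: eq_in_linext => w /(progressive_coordT zQ); exact: cofree_iso_Delta_M.
Qed.

Lemma cofree_iso_eps z : cofreeQ (YSymk 1) z -> eps (cofree_iso z) = epsQ z.
Proof.
move=> zQ; rewrite -(ofT_coordT z) /ofT /tmap (linext_comp cofree_iso) /eps /epsQ.
rewrite !mcoeff_linext; apply: eq_big_seq => w /(progressive_coordT zQ) w_prog.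
rewrite /comp cofree_iso_M // mcoeff_M_Leaf mcoeff_tensn; congr (_ * _).
by case: w w_prog => [|[|l r] w].
Qed.

Theorem theorem5p2 :
  (* (1) YSym = (+)_{k>=0} (YSym)^k : every element is a finite sum of
         homogeneous components ... *)
  (forall x : YSym, exists xs : seq YSym,
      (forall k, (k < size xs)%N -> YSymk k xs`_k) /\
      x = \sum_(k < size xs) xs`_k) /\
  (* ... and the sum is direct *)
  (forall xs : seq YSym,
      (forall k, (k < size xs)%N -> YSymk k xs`_k) ->
      \sum_(k < size xs) xs`_k = 0 ->
      forall k, (k < size xs)%N -> xs`_k = 0) /\
  (* (2) coalgebra grading: Delta((YSym)^k) <= sum_{i+j=k} (YSym)^i (x) (YSym)^j *)
  (forall k x, YSymk k x -> YSymk2 k (Delta x)) /\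
  (* (3) the counit vanishes on (YSym)^k for k >= 1 *)
  (forall k x, (0 < k)%N -> YSymk k x -> eps x = 0) /\
  (* (4) cofreeness: an isomorphism of graded coalgebras Q(V) ~ YSym,
         V = (YSym)^1 *)
  (exists phi : {linear TY -> YSym},
      (forall z1 z2, cofreeQ (YSymk 1) z1 -> cofreeQ (YSymk 1) z2 ->
                     phi z1 = phi z2 -> z1 = z2) /\
      (forall x : YSym, exists z, cofreeQ (YSymk 1) z /\ phi z = x) /\
      (forall k z, tpow (YSymk 1) k z -> YSymk k (phi z)) /\
      (forall z, cofreeQ (YSymk 1) z -> Delta (phi z) = tensmap phi (deconc z)) /\
      (forall z, cofreeQ (YSymk 1) z -> eps (phi z) = epsQ z)).
Proof.
split; first exact: homogeneous_decomposition.
split; first exact: homogeneous_sum_eq0.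
split; first exact: Delta_YSymk.
split; first exact: eps_YSymk.
exists cofree_iso; split.
  by move=> z1 z2 z1Q z2Q z12; rewrite -(cofree_isoK z1Q) -(cofree_isoK z2Q) z12.
split.
  move=> x; exists (cofree_iso_inv x).
  by rewrite cofree_iso_invK; split=> //; apply: cofreeQ_cofree_iso_inv.
split; first exact: cofree_iso_graded.
split; first exact: cofree_iso_Delta.
exact: cofree_iso_eps.
Qed.
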